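(* Let $G$ be a locally compact, $\sigma$-compact abelian group acting continuously on a compact metric space $(X,d)$. If the proximal relation $\Pr=\{(x,y):\inf_{t\in G}d(t\cdot x,t\cdot y)=0\}$ is closed in $X\times X$, then $\Pr$ coincides with the complete proximality relation $\sim_{cp}$.
   Context: Let $\mathcal A$ be the collection of subsets $A\subset G$ which contain a translate of every compact subset of $G$. Points $x,y\in X$ are proximal in $A$ if $\inf_{t\in A}d(t\cdot x,t\cdot y)=0$, and completely proximal, $x\sim_{cp}y$, if they are proximal in every $A\in\mathcal A$. *)

From Stdlib Require Import Reals List Classical.
Open Scope R_scope.

Definition is_topology {T : Type} (op : (T -> Prop) -> Prop) : Prop :=
  op (fun _ => True) /\
  (forall U V, op U -> op V -> op (fun x => U x /\ V x)) /\
  (forall F : (T -> Prop) -> Prop,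
      (forall U, F U -> op U) -> op (fun x => exists U, F U /\ U x)).

Definition is_closed {T : Type} (op : (T -> Prop) -> Prop) (C : T -> Prop) :=
  op (fun x => ~ C x).

Definition prod_open {S T : Type} (opS : (S -> Prop) -> Prop)
  (opT : (T -> Prop) -> Prop) (W : S * T -> Prop) : Prop :=
  forall p, W p -> exists A B, opS A /\ opT B /\ A (fst p) /\ B (snd p) /\
    (forall a b, A a -> B b -> W (a, b)).

Definition continuous {S T : Type} (opS : (S -> Prop) -> Prop)
  (opT : (T -> Prop) -> Prop) (f : S -> T) : Prop :=
  forall V, opT V -> opS (fun x => V (f x)).

Definition is_compact {T : Type} (op : (T -> Prop) -> Prop) (K : T -> Prop) : Prop :=
  forall F : (T -> Prop) -> Prop,
    (forall U, F U -> op U) ->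
    (forall x, K x -> exists U, F U /\ U x) ->
    exists l : list (T -> Prop),
      (forall U, In U l -> F U) /\ (forall x, K x -> exists U, In U l /\ U x).

Definition hausdorff {T : Type} (op : (T -> Prop) -> Prop) : Prop :=
  forall x y, x <> y -> exists U V, op U /\ op V /\ U x /\ V y /\
    (forall z, U z -> V z -> False).

Definition locally_compact {T : Type} (op : (T -> Prop) -> Prop) : Prop :=
  hausdorff op /\
  forall x, exists U K, op U /\ U x /\ (forall z, U z -> K z) /\ is_compact op K.

Definition sigma_compact {T : Type} (op : (T -> Prop) -> Prop) : Prop :=
  exists K : nat -> T -> Prop, (forall n, is_compact op (K n)) /\
    (forall x, exists n, K n x).

Definition is_abelian_group {G : Type} (mul : G -> G -> G) (inv : G -> G)
  (e : G) : Prop :=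
  (forall a b c, mul a (mul b c) = mul (mul a b) c) /\
  (forall a, mul e a = a) /\
  (forall a, mul (inv a) a = e) /\
  (forall a b, mul a b = mul b a).

Definition is_topological_group {G : Type} (mul : G -> G -> G) (inv : G -> G)
  (opG : (G -> Prop) -> Prop) : Prop :=
  continuous (prod_open opG opG) opG (fun p => mul (fst p) (snd p)) /\
  continuous opG opG inv.

Definition is_metric {X : Type} (d : X -> X -> R) : Prop :=
  (forall x y, 0 <= d x y) /\
  (forall x y, d x y = 0 <-> x = y) /\
  (forall x y, d x y = d y x) /\
  (forall x y z, d x z <= d x y + d y z).

Definition metric_open {X : Type} (d : X -> X -> R) (U : X -> Prop) : Prop :=
  forall x, U x -> exists r, 0 < r /\ forall y, d x y < r -> U y.

Definition is_action {G X : Type} (mul : G -> G -> G) (e : G)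
  (act : G -> X -> X) : Prop :=
  (forall x, act e x = x) /\
  (forall s t x, act (mul s t) x = act s (act t x)).

(** x, y proximal in A : inf_{t in A} d(t x, t y) = 0 (d >= 0). *)
Definition proximal_in {G X : Type} (act : G -> X -> X) (d : X -> X -> R)
  (A : G -> Prop) (x y : X) : Prop :=
  forall eps, 0 < eps -> exists t, A t /\ d (act t x) (act t y) < eps.

Definition proximal {G X : Type} (act : G -> X -> X) (d : X -> X -> R)
  (x y : X) : Prop :=
  proximal_in act d (fun _ => True) x y.

Definition in_calA {G : Type} (mul : G -> G -> G) (opG : (G -> Prop) -> Prop)
  (A : G -> Prop) : Prop :=
  forall K : G -> Prop, is_compact opG K -> exists g, forall k, K k -> A (mul g k).

Definition completely_proximal {G X : Type} (mul : G -> G -> G)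
  (opG : (G -> Prop) -> Prop) (act : G -> X -> X) (d : X -> X -> R)
  (x y : X) : Prop :=
  forall A, in_calA mul opG A -> proximal_in act d A x y.

From Stdlib Require Import Reals Lra List Classical.
Open Scope R_scope.

(** Call a pair of sets (A, B) of X "eps-witnessed" when one
    finite set L of group elements suffices to bring every proximal pair of
    A x B within eps: some t in L has d(t a, t b) < eps.  Since Pr is closed,
    every point of X x X has an open box around it that is eps-witnessed
    (trivially outside Pr, by continuity of one translate inside Pr).  Two
    successive compactness arguments on X (first in the second coordinate,
    then in the first) glue these boxes into the statement that X x X itself
    is eps-witnessed.  Now if (x, y) is proximal and A contains a translate
    g L of the finite (hence compact) witness set L, then (g x, g y) is
    proximal (Pr is G-invariant because G is abelian), so some t in L gives
    d(g t x, g t y) < eps with g t in A.  The converse is immediate since G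
    itself belongs to the collection cal_A. *)

Lemma ball_open {X : Type} (d : X -> X -> R) (Hd : is_metric d) c r :
  metric_open d (fun z => d c z < r).
Proof.
  destruct Hd as [_ [_ [_ Htri]]].
  intros z Hz. exists (r - d c z). split; [lra|].
  intros y Hy. pose proof (Htri c z y). lra.
Qed.

Lemma inter_open {X : Type} (d : X -> X -> R) U V :
  metric_open d U -> metric_open d V -> metric_open d (fun z => U z /\ V z).
Proof.
  intros HU HV z [Uz Vz].
  destruct (HU z Uz) as [r1 [Hr1 H1]]. destruct (HV z Vz) as [r2 [Hr2 H2]].
  exists (Rmin r1 r2). split; [apply Rmin_pos; auto|].
  intros y Hy. pose proof (Rmin_l r1 r2). pose proof (Rmin_r r1 r2).
  split; [apply H1 | apply H2]; lra.
Qed.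

Lemma translate_open {G X : Type} (opG : (G -> Prop) -> Prop) (d : X -> X -> R)
  (act : G -> X -> X)
  (Hactc : continuous (prod_open opG (metric_open d)) (metric_open d)
             (fun p => act (fst p) (snd p))) t V :
  metric_open d V -> metric_open d (fun z => V (act t z)).
Proof.
  intros HV z Hz.
  destruct (Hactc V HV (t, z) Hz) as [A [B [_ [oB [At [Bz HAB]]]]]].
  destruct (oB z Bz) as [r [Hr Hball]].
  exists r. split; [exact Hr|]. intros y Hy. exact (HAB t y At (Hball y Hy)).
Qed.

Lemma finite_compact {G : Type} (opG : (G -> Prop) -> Prop) (L : list G) :
  is_compact opG (fun t => In t L).
Proof.
  induction L as [|t L IH]; intros F HF Hcov.
  - exists nil. split; [intros U []|intros x []].
  - destruct (Hcov t (or_introl eq_refl)) as [U [FU Ut]].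
    destruct (IH F HF (fun x Hx => Hcov x (or_intror Hx))) as [l [Hl1 Hl2]].
    exists (U :: l). split.
    + intros V [<-|HV]; auto.
    + intros x [<-|Hx].
      * exists U; split; [left|]; auto.
      * destruct (Hl2 x Hx) as [V [HV Vx]]. exists V; split; [right|]; auto.
Qed.

Lemma compact_glue {X : Type} (op : (X -> Prop) -> Prop) (Q : (X -> Prop) -> Prop)
  (Hcpt : is_compact op (fun _ => True))
  (Qempty : Q (fun _ => False))
  (Qunion : forall U V, Q U -> Q V -> Q (fun z => U z \/ V z))
  (Qshrink : forall U V, (forall z, V z -> U z) -> Q U -> Q V)
  (Qlocal : forall x, exists U, op U /\ U x /\ Q U) :
  Q (fun _ => True).
Proof.
  destruct (Hcpt (fun U => op U /\ Q U)) as [l [Hl Hcov]].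
  - intros U [HU _]; exact HU.
  - intros x _. destruct (Qlocal x) as [U [oU [Ux QU]]]. exists U; auto.
  - assert (Qcover : Q (fun z => exists U, In U l /\ U z)).
    { clear Hcov. induction l as [|U l IH].
      - apply (Qshrink (fun _ => False)); [|exact Qempty].
        intros z [U [[] _]].
      - apply (Qshrink (fun z => U z \/ exists V, In V l /\ V z)).
        + intros z [V [[<-|HV] Vz]]; [left | right; exists V]; auto.
        + apply Qunion; [apply (Hl U (or_introl eq_refl)) |].
          apply IH. intros V HV. exact (Hl V (or_intror HV)). }
    apply (Qshrink _ _ (fun z _ => Hcov z I)), Qcover.
Qed.

Section FiniteWitness.

Variables (G X : Type) (d : X -> X -> R) (act : G -> X -> X).

Definition witnessed (eps : R) (A B : X -> Prop) : Prop :=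
  exists L : list G, forall a b, A a -> B b -> proximal act d a b ->
    exists t, In t L /\ d (act t a) (act t b) < eps.

Lemma witnessed_empty_l eps B : witnessed eps (fun _ => False) B.
Proof. exists nil. intros a b []. Qed.

Lemma witnessed_empty_r eps A : witnessed eps A (fun _ => False).
Proof. exists nil. intros a b _ []. Qed.

Lemma witnessed_shrink eps A B A' B' :
  (forall a, A' a -> A a) -> (forall b, B' b -> B b) ->
  witnessed eps A B -> witnessed eps A' B'.
Proof.
  intros HA HB [L HL]. exists L. intros a b Ha Hb. apply HL; auto.
Qed.

Lemma witnessed_union_l eps A1 A2 B :
  witnessed eps A1 B -> witnessed eps A2 B ->
  witnessed eps (fun a => A1 a \/ A2 a) B.
Proof.
  intros [L1 HL1] [L2 HL2]. exists (L1 ++ L2).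
  intros a b [Ha|Ha] Hb Pab;
    [destruct (HL1 a b Ha Hb Pab) as [t [Ht Hdt]]
    |destruct (HL2 a b Ha Hb Pab) as [t [Ht Hdt]]];
    exists t; split; auto; apply in_or_app; auto.
Qed.

Lemma witnessed_union_r eps A B1 B2 :
  witnessed eps A B1 -> witnessed eps A B2 ->
  witnessed eps A (fun b => B1 b \/ B2 b).
Proof.
  intros [L1 HL1] [L2 HL2]. exists (L1 ++ L2).
  intros a b Ha [Hb|Hb] Pab;
    [destruct (HL1 a b Ha Hb Pab) as [t [Ht Hdt]]
    |destruct (HL2 a b Ha Hb Pab) as [t [Ht Hdt]]];
    exists t; split; auto; apply in_or_app; auto.
Qed.

Hypothesis Hd : is_metric d.
Hypothesis HXcpt : is_compact (metric_open d) (fun _ => True).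

Section Global.

Variable opG : (G -> Prop) -> Prop.
Hypothesis Hactc : continuous (prod_open opG (metric_open d)) (metric_open d)
                     (fun p => act (fst p) (snd p)).
Hypothesis Hclosed : is_closed (prod_open (metric_open d) (metric_open d))
                       (fun p => proximal act d (fst p) (snd p)).
Variables (eps : R) (Heps : 0 < eps).

(** Off Pr this uses the closedness of Pr (the box misses Pr); on Pr a single
    translate t with d(t x, t y) < eps works on a small box, by continuity
    of t. *)
Lemma witnessed_locally x y :
  exists A B, metric_open d A /\ metric_open d B /\ A x /\ B y /\
    witnessed eps A B.
Proof.
  pose proof Hd as [_ [Hdiag [Hsym Htri]]].
  destruct (classic (proximal act d x y)) as [Pxy|nPxy].
  - destruct (Pxy eps Heps) as [t [_ Ht]].
    set (r := (eps - d (act t x) (act t y)) / 2).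
    assert (Hr : 0 < r) by (unfold r; lra).
    exists (fun z => d (act t x) (act t z) < r), (fun z => d (act t y) (act t z) < r).
    assert (Hself : forall z, d z z = 0) by (intro z; apply Hdiag; reflexivity).
    split; [exact (translate_open opG d act Hactc t _ (ball_open d Hd (act t x) r))|].
    split; [exact (translate_open opG d act Hactc t _ (ball_open d Hd (act t y) r))|].
    rewrite !Hself. split; [exact Hr|]. split; [exact Hr|].
    exists (t :: nil). intros a b Ha Hb _. exists t. split; [left; reflexivity|].
    pose proof (Htri (act t a) (act t x) (act t b)).
    pose proof (Htri (act t x) (act t y) (act t b)).
    rewrite (Hsym (act t a) (act t x)) in *. unfold r in *. lra.
  - destruct (Hclosed (x, y) nPxy) as [A [B [oA [oB [Ax [By HAB]]]]]].
    exists A, B. repeat split; auto.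
    exists nil. intros a b Ha Hb Pab. destruct (HAB a b Ha Hb Pab).
Qed.

(** First compactness argument (in the second coordinate): every x has an
    open neighbourhood A with A x X eps-witnessed.  The boxes A_i x B_i
    around (x, y_i) glue into (inter A_i) x (union B_i). *)
Lemma witnessed_row x :
  exists A, metric_open d A /\ A x /\ witnessed eps A (fun _ => True).
Proof.
  pose (Qx := fun B => exists A, metric_open d A /\ A x /\ witnessed eps A B).
  apply (compact_glue (metric_open d) Qx HXcpt).
  - exists (fun _ => True). split; [intros z _; exists 1; split; auto; lra|].
    split; [exact I | apply witnessed_empty_r].
  - intros U V [A1 [oA1 [A1x W1]]] [A2 [oA2 [A2x W2]]].
    exists (fun z => A1 z /\ A2 z).
    split; [apply inter_open; auto|]. split; [auto|].
    apply witnessed_union_r;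
      [apply (witnessed_shrink eps A1 U) | apply (witnessed_shrink eps A2 V)];
      firstorder.
  - intros U V HVU [A [oA [Ax W]]]. exists A.
    split; [|split]; auto. apply (witnessed_shrink eps A U); auto.
  - intro y. destruct (witnessed_locally x y)
      as [A [B [oA [oB [Ax [By W]]]]]].
    exists B. split; [|split]; auto. exists A; auto.
Qed.

Lemma witnessed_everywhere : witnessed eps (fun _ => True) (fun _ => True).
Proof.
  apply (compact_glue (metric_open d) (fun A => witnessed eps A (fun _ => True)) HXcpt).
  - apply witnessed_empty_l.
  - intros U V. apply witnessed_union_l.
  - intros U V HVU. apply witnessed_shrink; auto.
  - exact witnessed_row.
Qed.

End Global.

End FiniteWitness.

(** For an action of an abelian group, Pr is invariant under the diagonal
    action: if s brings x and y close, then s g^-1 brings g x and g y close. *)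
Lemma proximal_translate {G X : Type} (mul : G -> G -> G) (inv : G -> G) (e : G)
  (d : X -> X -> R) (act : G -> X -> X)
  (Hgrp : is_abelian_group mul inv e) (Hact : is_action mul e act) g x y :
  proximal act d x y -> proximal act d (act g x) (act g y).
Proof.
  destruct Hgrp as [Hassoc [Hid [Hinv Hcomm]]]. destruct Hact as [_ Hamul].
  intros Pxy eps Heps. destruct (Pxy eps Heps) as [s [_ Hs]].
  assert (Hcancel : mul (mul s (inv g)) g = s).
  { rewrite <- Hassoc, Hinv, Hcomm, Hid. reflexivity. }
  exists (mul s (inv g)). split; [exact I|].
  rewrite <- !Hamul, Hcancel. exact Hs.
Qed.

Theorem mainTheorem18
  (G : Type) (mul : G -> G -> G) (inv : G -> G) (e : G)
  (opG : (G -> Prop) -> Prop)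
  (X : Type) (d : X -> X -> R) (act : G -> X -> X)
  (HgrpG : is_abelian_group mul inv e)
  (HtopG : is_topology opG)
  (HtgG : is_topological_group mul inv opG)
  (HlcG : locally_compact opG)
  (HscG : sigma_compact opG)
  (Hd : is_metric d)
  (HXcpt : is_compact (metric_open d) (fun _ => True))
  (Hact : is_action mul e act)
  (Hactc : continuous (prod_open opG (metric_open d)) (metric_open d)
             (fun p => act (fst p) (snd p)))
  (Hclosed : is_closed (prod_open (metric_open d) (metric_open d))
               (fun p => proximal act d (fst p) (snd p))) :
  forall x y : X, proximal act d x y <-> completely_proximal mul opG act d x y.
Proof.
  intros x y. split.
  - intros Pxy A HA eps Heps.
    destruct (witnessed_everywhere G X d act Hd HXcpt opG Hactc Hclosed eps Heps)
      as [L HL].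
    destruct (HA (fun t => In t L) (finite_compact opG L)) as [g Hg].
    destruct (HL (act g x) (act g y) I I
                (proximal_translate mul inv e d act HgrpG Hact g x y Pxy))
      as [t [Ht Hdt]].
    exists (mul g t). split; [exact (Hg t Ht)|].
    destruct HgrpG as [_ [_ [_ Hcomm]]]. destruct Hact as [_ Hamul].
    rewrite Hcomm, !Hamul. exact Hdt.
  - intros Hcp. apply Hcp. intros K _. exists e. intros k _. exact I.
Qed.
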